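(* Let $k\ge 2$ and $D=\{1,\dots,k\}$. Each of the following cost functions on $D$ has a $k$-submodular discrete relaxation on the domain $\{0,1,\dots,k\}$: (1) any unary function $f:D\to\mathbb{R}$; (2) the soft version of the constraint $(x=\pi(y))$, for any permutation $\pi$ of $D$; (3) the soft version of the constraint $(x=d\lor y=d')$, for $d,d'\in D$; (4) the soft version of the constraint $(x_1=\dots=x_r)$, for any $r$. The scaling factor in all cases is $2$.
   Context: The soft version of a relation $R$ is the cost function taking value $0$ on tuples in $R$ and $1$ otherwise. A discrete relaxation of $f:D^r\to\mathbb{R}$ on $D'\supset D$ is $f':(D')^r\to\mathbb{R}$ with $\min f'=\min f$ and $f'=f$ on $D^r$. The scaling factor is the smallest rational $c$ such that $c\cdot f'$ is integral (for integer-valued $f$). With $\sqcap,\sqcup$ on $\{0,\dots,k\}$ given by $0\sqcap x=0$, $0\sqcup x=x$, $x\sqcap x=x\sqcup x=x$ and $x\sqcap y=x\sqcup y=0$ for distinct nonzero $x,y$, a function $f'$ is $k$-submodular if $f'(X)+f'(Y)\ge f'(X\sqcap Y)+f'(X\sqcup Y)$ for all $X,Y$, coordinatewise. *)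

From HB Require Import structures.
From mathcomp Require Import all_boot all_order all_fingroup all_algebra.
Set Implicit Arguments. Unset Strict Implicit. Unset Printing Implicit Defensive.
Import Order.TTheory GRing.Theory Num.Theory.
Local Open Scope ring_scope.

(* Conventions: D = {1,...,k} is encoded as 'I_k (d : 'I_k stands for d+1);
   the extended domain D' = {0,1,...,k} is 'I_k.+1, with ord0 playing 0.
   The embedding D -> D' is lift ord0 (value d ↦ d+1). *)

Definition embD (k : nat) (d : 'I_k) : 'I_k.+1 := lift ord0 d.

Definition embT (k r : nat) (x : {ffun 'I_r -> 'I_k}) : {ffun 'I_r -> 'I_k.+1} :=
  [ffun i => embD (x i)].

Definition kmeet (k : nat) (x y : 'I_k.+1) : 'I_k.+1 :=
  if x == y then x else ord0.
Definition kjoin (k : nat) (x y : 'I_k.+1) : 'I_k.+1 :=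
  if x == ord0 then y else if y == ord0 then x else if x == y then x else ord0.

Definition ksubmodular (R : numDomainType) (k r : nat)
    (g : {ffun 'I_r -> 'I_k.+1} -> R) : Prop :=
  forall X Y : {ffun 'I_r -> 'I_k.+1},
    g [ffun i => kmeet (X i) (Y i)] + g [ffun i => kjoin (X i) (Y i)]
      <= g X + g Y.

(* f' is a discrete relaxation of f on D' : agrees with f on D^r and
   min f' = min f (as f' extends f, min f' <= min f is automatic; the other
   inequality says every value of f' is bounded below by some value of f). *)
Definition discrete_relaxation (R : numDomainType) (k r : nat)
    (f : {ffun 'I_r -> 'I_k} -> R) (f' : {ffun 'I_r -> 'I_k.+1} -> R) : Prop :=
  (forall x, f' (embT x) = f x) /\
  (forall X, exists x, f x <= f' X).

Definition soft (R : numDomainType) (T : Type) (P : T -> bool) : T -> R :=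
  fun x => if P x then 0 else 1.

(* existence of a k-submodular relaxation with scaling factor (at most) 2:
   whenever f is integer-valued, 2 * f' is integer-valued *)
Definition has_ksub_relax2 (R : archiRealFieldType) (k r : nat)
    (f : {ffun 'I_r -> 'I_k} -> R) : Prop :=
  exists f' : {ffun 'I_r -> 'I_k.+1} -> R,
    [/\ discrete_relaxation f f', ksubmodular f' &
        ((forall x, f x \is a Num.int) -> forall X, 2 * f' X \is a Num.int)].

(* The relaxations of the soft constraints take values in {0, 1/2, 1}, so we
   work with doubled, integer-valued costs.  For equality, the k-meet of X
   and Y keeps only the coordinates where they agree and the k-join only uses
   labels of X and Y; k-submodularity then follows from a case analysis on
   whether X and Y use two distinct nonzero labels and, if not, on whether
   their labels coincide.  The constraint x = pi(y) is equality after
   relabelling y by pi extended with 0 |-> 0, and zero-fixing relabellings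
   commute with k-meet and k-join.  The unary relaxation sends 0 to min f. *)

From HB Require Import structures.
From mathcomp Require Import all_boot all_order all_fingroup all_algebra.
From mathcomp Require Import zify.
Set Implicit Arguments.
Unset Strict Implicit.
Unset Printing Implicit Defensive.

Import Order.TTheory GRing.Theory Num.Theory.
Local Open Scope ring_scope.

Section Pointwise.

Variable k : nat.
Implicit Types x y : 'I_k.+1.

Lemma kmeetC x y : kmeet x y = kmeet y x.
Proof. by rewrite /kmeet eq_sym; case: eqP => // ->. Qed.

Lemma kjoinC x y : kjoin x y = kjoin y x.
Proof.
rewrite /kjoin; case: (eqVneq x ord0) => [->|_]; case: (eqVneq y ord0) => [|_] //.
by rewrite [y == x]eq_sym; case: eqVneq => [->|].
Qed.

Lemma kmeet0l y : kmeet ord0 y = ord0.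
Proof. by rewrite /kmeet; case: ifP. Qed.

Lemma kjoin0l y : kjoin ord0 y = y.
Proof. by rewrite /kjoin eqxx. Qed.

Lemma kmeet_neq0 x y : kmeet x y != ord0 -> kmeet x y = x /\ x = y.
Proof. by rewrite /kmeet; case: (eqVneq x y) => [->|]; rewrite ?eqxx. Qed.

Lemma kjoin_neq0 x y : kjoin x y != ord0 -> kjoin x y = x \/ kjoin x y = y.
Proof.
rewrite /kjoin; case: ifP => _; first by right.
by case: ifP => _; [left | case: ifP => _; [left | rewrite eqxx]].
Qed.

Lemma kjoin_neq0r x y : y != ord0 -> kjoin x y != ord0 -> kjoin x y = y.
Proof.
rewrite /kjoin => /negbTE y0; case: (eqVneq x ord0) => // _; rewrite y0.
by case: (eqVneq x y) => [->|]; rewrite ?eqxx.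
Qed.

Lemma kmeet_kjoin_min (R : numDomainType) (phi : 'I_k.+1 -> R) x y :
  (forall z, phi ord0 <= phi z) -> phi (kmeet x y) + phi (kjoin x y) <= phi x + phi y.
Proof.
move=> phi0; rewrite /kmeet /kjoin; case: (eqVneq x y) => [-> | xy].
  by rewrite !if_same.
case: (eqVneq x ord0) => [-> //|_].
case: (eqVneq y ord0) => [->|_]; first by rewrite addrC.
by rewrite lerD.
Qed.

End Pointwise.

Section Tuples.

Variables k r : nat.
Implicit Types (X Y : {ffun 'I_r -> 'I_k.+1}) (a b : 'I_k.+1).

Definition kmeetF X Y : {ffun 'I_r -> 'I_k.+1} := [ffun i => kmeet (X i) (Y i)].
Definition kjoinF X Y : {ffun 'I_r -> 'I_k.+1} := [ffun i => kjoin (X i) (Y i)].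

Lemma ksubmodularE (R : numDomainType) (g : {ffun 'I_r -> 'I_k.+1} -> R) :
  ksubmodular g <-> forall X Y, g (kmeetF X Y) + g (kjoinF X Y) <= g X + g Y.
Proof. by []. Qed.

Lemma kmeetFC X Y : kmeetF X Y = kmeetF Y X.
Proof. by apply/ffunP => i; rewrite !ffunE kmeetC. Qed.

Lemma kjoinFC X Y : kjoinF X Y = kjoinF Y X.
Proof. by apply/ffunP => i; rewrite !ffunE kjoinC. Qed.

Definition relabel (s : 'I_r -> {perm 'I_k.+1}) X : {ffun 'I_r -> 'I_k.+1} :=
  [ffun i => s i (X i)].

Section Relabel.

Variable s : 'I_r -> {perm 'I_k.+1}.
Hypothesis s0 : forall i, s i ord0 = ord0.

Lemma relabel_kmeetF X Y : relabel s (kmeetF X Y) = kmeetF (relabel s X) (relabel s Y).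
Proof. by apply/ffunP => i; rewrite !ffunE /kmeet (inj_eq perm_inj) (fun_if (s i)) s0. Qed.

Lemma relabel_kjoinF X Y : relabel s (kjoinF X Y) = kjoinF (relabel s X) (relabel s Y).
Proof.
have s_eq0 i x : (s i x == ord0) = (x == ord0) by rewrite -{1}(s0 i) (inj_eq perm_inj).
by apply/ffunP => i; rewrite !ffunE /kjoin !s_eq0 (inj_eq perm_inj) !(fun_if (s i)) s0.
Qed.

Lemma ksubmodular_relabel (R : numDomainType) (g : {ffun 'I_r -> 'I_k.+1} -> R) :
  ksubmodular g -> ksubmodular (fun X => g (relabel s X)).
Proof.
move=> /ksubmodularE g_sub; apply/ksubmodularE => X Y.
by rewrite relabel_kmeetF relabel_kjoinF.
Qed.

End Relabel.

Definition conflict X :=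
  [exists i, exists j, [&& X i != ord0, X j != ord0 & X i != X j]].
Definition total X := [forall i, X i != ord0].
Definition null X := [forall i, X i == ord0].
Definition uniform a X := forall i, X i != ord0 -> X i = a.

Definition eq_relax2 X : int :=
  if conflict X then 2 else if total X || null X then 0 else 1.

Lemma uniform_nconflict a X : uniform a X -> ~~ conflict X.
Proof.
move=> uX; apply/existsPn => i; apply/existsPn => j.
by apply/and3P => -[/uX-> /uX->]; rewrite eqxx.
Qed.

Lemma nconflict_uniform X : ~~ conflict X -> exists a, uniform a X.
Proof.
move=> /existsPn cX; case: (pickP (fun i => X i != ord0)) => [i Xi | X0].
  exists (X i) => j Xj; apply/eqP.
  by move/existsPn: (cX j) => /(_ i); rewrite Xj Xi negbK.
by exists ord0 => j; rewrite X0.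
Qed.

Lemma null_uniform X : null X -> uniform ord0 X.
Proof. by move=> /forallP nX i; rewrite (eqP (nX i)). Qed.

Lemma uniform_null a b X : uniform a X -> uniform b X -> a != b -> null X.
Proof.
move=> uaX ubX ab; apply/forallP => i; case: (eqVneq (X i) ord0) => // Xi.
by rewrite -(uaX i Xi) (ubX i Xi) eqxx in ab.
Qed.

Lemma uniform_kmeetF a X Y : uniform a Y -> uniform a (kmeetF X Y).
Proof.
move=> uY i; rewrite ffunE => Mi; have [eM eXY] := kmeet_neq0 Mi.
by rewrite eM eXY; apply: uY; rewrite -eXY -eM.
Qed.

Lemma uniform_kjoinF a X Y : uniform a X -> uniform a Y -> uniform a (kjoinF X Y).
Proof.
move=> uX uY i; rewrite ffunE => Ji.
by case: (kjoin_neq0 Ji) => e; rewrite e; [apply: uX | apply: uY]; rewrite -e.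
Qed.

Lemma uniform_kjoinF_total a X Y : total Y -> uniform a Y -> uniform a (kjoinF X Y).
Proof.
move=> /forallP tY uY i; rewrite ffunE => Ji.
by rewrite (kjoin_neq0r (tY i) Ji); apply: uY.
Qed.

Lemma kmeetF_null X Y : null X -> kmeetF X Y = X.
Proof. by move=> /forallP nX; apply/ffunP => i; rewrite ffunE (eqP (nX i)) kmeet0l. Qed.

Lemma kjoinF_null X Y : null X -> kjoinF X Y = Y.
Proof. by move=> /forallP nX; apply/ffunP => i; rewrite ffunE (eqP (nX i)) kjoin0l. Qed.

Lemma kmeetF_total a X Y : total X -> uniform a X -> uniform a Y -> kmeetF X Y = Y.
Proof.
move=> /forallP tX uX uY; apply/ffunP => i; rewrite ffunE /kmeet.
case: (eqVneq (Y i) ord0) => [->|Yi]; first by case: ifP => // /eqP.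
by rewrite (uX i (tX i)) (uY i Yi) eqxx.
Qed.

Lemma kjoinF_total a X Y : total X -> uniform a X -> uniform a Y -> kjoinF X Y = X.
Proof.
move=> /forallP tX uX uY; apply/ffunP => i; rewrite ffunE /kjoin (negbTE (tX i)).
case: (eqVneq (Y i) ord0) => // Yi.
by rewrite (uX i (tX i)) (uY i Yi) eqxx.
Qed.

Lemma eq_relax2_ge0 X : 0 <= eq_relax2 X.
Proof. by rewrite /eq_relax2; do !case: ifP. Qed.

Lemma eq_relax2_le2 X : eq_relax2 X <= 2.
Proof. by rewrite /eq_relax2; do !case: ifP. Qed.

Lemma eq_relax2_conflict X : conflict X -> eq_relax2 X = 2.
Proof. by rewrite /eq_relax2 => ->. Qed.

Lemma eq_relax2_uniform a X :
  uniform a X -> eq_relax2 X = if total X || null X then 0 else 1.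
Proof. by move=> /uniform_nconflict/negbTE; rewrite /eq_relax2 => ->. Qed.

Lemma eq_relax2_uniform_le1 a X : uniform a X -> eq_relax2 X <= 1.
Proof. by move=> /eq_relax2_uniform ->; case: ifP. Qed.

Lemma eq_relax2_null X : null X -> eq_relax2 X = 0.
Proof. by move=> nX; rewrite (eq_relax2_uniform (null_uniform nX)) nX orbT. Qed.

Lemma eq_relax2_ksub_conflict b X Y : conflict X -> uniform b Y ->
  eq_relax2 (kmeetF X Y) + eq_relax2 (kjoinF X Y) <= eq_relax2 X + eq_relax2 Y.
Proof.
move=> cX uY; rewrite (eq_relax2_conflict cX).
have M_le1 := eq_relax2_uniform_le1 (uniform_kmeetF (X := X) uY).
have J_le2 := eq_relax2_le2 (kjoinF X Y).
have Y_ge0 := eq_relax2_ge0 Y.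
have [nY|nnY] := boolP (null Y).
  by rewrite kmeetFC kmeetF_null // (eq_relax2_null nY); lia.
have [tY|ntY] := boolP (total Y).
  by have := eq_relax2_uniform_le1 (uniform_kjoinF_total (X := X) tY uY); lia.
by rewrite (eq_relax2_uniform uY) (negbTE ntY) (negbTE nnY) /=; lia.
Qed.

Lemma eq_relax2_ksub_same a X Y : uniform a X -> uniform a Y ->
  eq_relax2 (kmeetF X Y) + eq_relax2 (kjoinF X Y) <= eq_relax2 X + eq_relax2 Y.
Proof.
move=> uX uY.
have [tX|ntX] := boolP (total X).
  by rewrite (kmeetF_total tX uX uY) (kjoinF_total tX uX uY) addrC.
have [tY|ntY] := boolP (total Y).
  by rewrite kmeetFC kjoinFC (kmeetF_total tY uY uX) (kjoinF_total tY uY uX).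
have [nX|nnX] := boolP (null X); first by rewrite kmeetF_null // kjoinF_null.
have [nY|nnY] := boolP (null Y).
  by rewrite kmeetFC kjoinFC kmeetF_null // kjoinF_null // addrC.
rewrite (eq_relax2_uniform uX) (eq_relax2_uniform uY) (negbTE ntX) (negbTE nnX).
rewrite (negbTE ntY) (negbTE nnY) /=.
have := eq_relax2_uniform_le1 (uniform_kmeetF (X := X) uY).
by have := eq_relax2_uniform_le1 (uniform_kjoinF uX uY); lia.
Qed.

Lemma eq_relax2_kjoinF_distinct a b X Y : uniform a X -> uniform b Y -> a != b ->
  total X || null X -> eq_relax2 (kjoinF X Y) <= eq_relax2 Y.
Proof.
move=> uX uY ab /orP[tX|nX]; last by rewrite kjoinF_null.
have uJ : uniform a (kjoinF X Y) by rewrite kjoinFC; apply: uniform_kjoinF_total.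
have [tY|ntY] := boolP (total Y).
  have nJ := uniform_null uJ (uniform_kjoinF_total (X := X) tY uY) ab.
  by rewrite (eq_relax2_null nJ) eq_relax2_ge0.
have [nY|nnY] := boolP (null Y).
  by rewrite kjoinFC kjoinF_null // (eq_relax2_uniform uX) tX eq_relax2_ge0.
by rewrite (eq_relax2_uniform uY) (negbTE ntY) (negbTE nnY) /= (eq_relax2_uniform_le1 uJ).
Qed.

Lemma eq_relax2_ksub_distinct a b X Y : uniform a X -> uniform b Y -> a != b ->
  eq_relax2 (kmeetF X Y) + eq_relax2 (kjoinF X Y) <= eq_relax2 X + eq_relax2 Y.
Proof.
move=> uX uY ab.
have uMa : uniform a (kmeetF X Y) by rewrite kmeetFC; apply: uniform_kmeetF.
rewrite (eq_relax2_null (uniform_null uMa (uniform_kmeetF (X := X) uY) ab)) add0r.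
have := eq_relax2_ge0 X; have := eq_relax2_ge0 Y.
have [hX|hX] := boolP (total X || null X).
  by have := eq_relax2_kjoinF_distinct uX uY ab hX; lia.
have [hY|hY] := boolP (total Y || null Y).
  have ba : b != a by rewrite eq_sym.
  by rewrite kjoinFC; have := eq_relax2_kjoinF_distinct uY uX ba hY; lia.
rewrite (eq_relax2_uniform uX) (eq_relax2_uniform uY) (negbTE hX) (negbTE hY) /=.
by have := eq_relax2_le2 (kjoinF X Y); lia.
Qed.

Lemma ksubmodular_eq_relax2 : ksubmodular eq_relax2.
Proof.
apply/ksubmodularE => X Y.
have [cX|/nconflict_uniform[a uX]] := boolP (conflict X);
  have [cY|/nconflict_uniform[b uY]] := boolP (conflict Y).
- rewrite (eq_relax2_conflict cX) (eq_relax2_conflict cY).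
  by have := eq_relax2_le2 (kmeetF X Y); have := eq_relax2_le2 (kjoinF X Y); lia.
- exact: eq_relax2_ksub_conflict cX uY.
- by rewrite kmeetFC kjoinFC [eq_relax2 X + _]addrC; apply: eq_relax2_ksub_conflict cY uX.
- case: (eqVneq a b) uY => [<- uY|ab uY]; first exact: eq_relax2_ksub_same uX uY.
  exact: eq_relax2_ksub_distinct uX uY ab.
Qed.

Lemma eq_relax2_embT (x : {ffun 'I_r -> 'I_k}) :
  eq_relax2 (embT x) = if [forall i, forall j, x i == x j] then 0 else 2.
Proof.
have embT_neq0 i : embT x i != ord0 by rewrite ffunE eq_sym neq_lift.
have embT_eq i j : (embT x i == embT x j) = (x i == x j).
  by rewrite !ffunE (inj_eq (@lift_inj _ ord0)).
have conflict_embT : conflict (embT x) = ~~ [forall i, forall j, x i == x j].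
  apply/existsP/forallPn => [[i /existsP[j]] | [i /forallPn[j]]].
    by rewrite !embT_neq0 embT_eq => xij; exists i; apply/forallPn; exists j.
  by rewrite -embT_eq => xij; exists i; apply/existsP; exists j; rewrite !embT_neq0.
have total_embT : total (embT x) by apply/forallP.
by rewrite /eq_relax2 conflict_embT total_embT; case: [forall i, _].
Qed.

End Tuples.

Lemma has_ksub_relax2_soft (R : archiRealFieldType) k r
    (P : pred {ffun 'I_r -> 'I_k}) (h : {ffun 'I_r -> 'I_k.+1} -> int) :
  (exists x, P x) -> (forall X, 0 <= h X) ->
  (forall x, h (embT x) = if P x then 0 else 2) -> ksubmodular h ->
  has_ksub_relax2 (soft R P).
Proof.
move=> [x0 Px0] h_ge0 h_embT /ksubmodularE h_sub.
exists (fun X => (h X)%:~R / 2); split.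
- split=> [x|X]; last by exists x0; rewrite /soft Px0 divr_ge0 ?ler0z.
  by rewrite h_embT /soft; case: (P x); rewrite ?mul0r // divff ?pnatr_eq0.
- apply/ksubmodularE => X Y.
  by rewrite -!mulrDl ler_pM2r ?invr_gt0 // -!intrD ler_int.
- by move=> _ X; rewrite mulrC divfK ?pnatr_eq0 ?intr_int.
Qed.

Lemma all_equal_ord2 (T : eqType) (y : 'I_2 -> T) :
  [forall i, forall j, y i == y j] = (y ord0 == y ord_max).
Proof.
apply/forallP/eqP => [/(_ ord0)/forallP/(_ ord_max)/eqP // | e i].
have yE (l : 'I_2) : y l = y ord0.
  by case: l => -[|[|//]] hl; [|rewrite e]; congr y; apply: val_inj.
by apply/forallP => j; rewrite !yE.
Qed.

Lemma has_ksub_relax2_unary (R : archiRealFieldType) k (d0 : 'I_k) (f : 'I_k -> R) :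
  has_ksub_relax2 (fun x : {ffun 'I_1 -> 'I_k} => f (x ord0)).
Proof.
pose dmin := [arg min_(d < d0) f d]%O.
have f_min d : f dmin <= f d by rewrite /dmin; case: arg_minP => // e _; apply.
pose phi c := if unlift ord0 c is Some d then f d else f dmin.
exists (fun X => phi (X ord0)); split.
- split=> [x|X]; first by rewrite ffunE /phi liftK.
  rewrite /phi; case: unlift => [d|]; [exists [ffun=> d] | exists [ffun=> dmin]];
  by rewrite ffunE.
- apply/ksubmodularE => X Y; rewrite !ffunE; apply: kmeet_kjoin_min => c.
  by rewrite /phi unlift_none; case: unlift.
- move=> f_int X; have fd_int d : f d \is a Num.int by have := f_int [ffun=> d]; rewrite ffunE.
  by rewrite /phi; case: unlift => [d|]; rewrite rpredM ?natr_int.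
Qed.

Lemma has_ksub_relax2_soft_all_equal (R : archiRealFieldType) k r (d0 : 'I_k) :
  has_ksub_relax2 (soft R (fun x : {ffun 'I_r -> 'I_k} => [forall i, forall j, x i == x j])).
Proof.
apply: (has_ksub_relax2_soft R (h := @eq_relax2 k r)).
- by exists [ffun=> d0]; apply/forallP => i; apply/forallP => j; rewrite !ffunE.
- exact: eq_relax2_ge0.
- exact: eq_relax2_embT.
- exact: ksubmodular_eq_relax2.
Qed.

Lemma has_ksub_relax2_soft_perm (R : archiRealFieldType) k (d0 : 'I_k) (pi : {perm 'I_k}) :
  has_ksub_relax2 (soft R (fun x : {ffun 'I_2 -> 'I_k} => x ord0 == pi (x ord_max))).
Proof.
pose s (i : 'I_2) : {perm 'I_k.+1} := if i == ord0 then 1%g else lift_perm ord0 ord0 pi.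
have s0 i : s i ord0 = ord0 by rewrite /s; case: ifP; rewrite ?perm1 ?lift_perm_id.
apply: (has_ksub_relax2_soft R (h := fun X => eq_relax2 (relabel s X))).
- by exists [ffun i => if i == ord0 then pi d0 else d0]; rewrite !ffunE.
- by move=> X; apply: eq_relax2_ge0.
- move=> x.
  have -> : relabel s (embT x) = embT [ffun i => if i == ord0 then x i else pi (x i)].
    apply/ffunP => i; rewrite !ffunE /s /embD.
    by case: ifP; rewrite ?perm1 ?lift_perm_lift.
  by rewrite eq_relax2_embT all_equal_ord2 !ffunE.
- exact: (ksubmodular_relabel s0 (@ksubmodular_eq_relax2 k 2)).
Qed.

Section SoftOr.

Variables (k : nat) (d d' : 'I_k).

Definition or_relax2 (X : {ffun 'I_2 -> 'I_k.+1}) : int :=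
  let x := X ord0 in let y := X ord_max in
  if (x == embD d) || (y == embD d') then 0
  else if (x == ord0) && (y == ord0) then 0
  else if (x == ord0) || (y == ord0) then 1 else 2.

Lemma or_relax2_embT x :
  or_relax2 (embT x) = if (x ord0 == d) || (x ord_max == d') then 0 else 2.
Proof.
rewrite /or_relax2 !ffunE /embD !(inj_eq (@lift_inj _ ord0)).
by rewrite !(eq_sym _ ord0) !(negbTE (neq_lift _ _)).
Qed.

Ltac case_eqs :=
  repeat match goal with |- context [?a == ?b] =>
    first [is_var a | match a with ord0 => idtac end];
    first [is_var b | match b with ord0 => idtac end];
    case: (@eqP _ a b) => ?; try subst; rewrite /= ?eqxx
  end.

Lemma ksubmodular_or_relax2 : ksubmodular or_relax2.
Proof.
apply/ksubmodularE => X Y; rewrite /or_relax2 !ffunE /kmeet /kjoin.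
move: (neq_lift ord0 d) (neq_lift ord0 d'); rewrite /embD.
move: (lift ord0 d) (lift ord0 d') (X ord0) (X ord_max) (Y ord0) (Y ord_max).
by move=> e e' x y x' y'; case_eqs; first [done | move=> *; lia].
Qed.

End SoftOr.

Lemma has_ksub_relax2_soft_or (R : archiRealFieldType) k (d d' : 'I_k) :
  has_ksub_relax2
    (soft R (fun x : {ffun 'I_2 -> 'I_k} => (x ord0 == d) || (x ord_max == d'))).
Proof.
apply: (has_ksub_relax2_soft R (h := or_relax2 d d')).
- by exists [ffun=> d]; rewrite ffunE eqxx.
- by move=> X; rewrite /or_relax2; do !case: ifP.
- exact: or_relax2_embT.
- exact: ksubmodular_or_relax2.
Qed.

Theorem lemma3 (R : archiRealFieldType) (k : nat) (hk : (2 <= k)%N) :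
  [/\ (* (1) unary functions *)
      (forall f : 'I_k -> R,
         has_ksub_relax2 (fun x : {ffun 'I_1 -> 'I_k} => f (x ord0))),
      (* (2) soft (x = pi y) *)
      (forall pi : {perm 'I_k},
         has_ksub_relax2
           (soft R (fun x : {ffun 'I_2 -> 'I_k} => x ord0 == pi (x ord_max)))),
      (* (3) soft (x = d \/ y = d') *)
      (forall d d' : 'I_k,
         has_ksub_relax2
           (soft R (fun x : {ffun 'I_2 -> 'I_k} =>
                      (x ord0 == d) || (x ord_max == d')))) &
      (* (4) soft (x_1 = ... = x_r) *)
      (forall r : nat,
         has_ksub_relax2
           (soft R (fun x : {ffun 'I_r -> 'I_k} =>
                      [forall i, forall j, x i == x j])))].
Proof.
have d0 : 'I_k := Ordinal (ltnW hk).
split=> [f | pi | d d' | r].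
- exact: has_ksub_relax2_unary d0 f.
- exact: has_ksub_relax2_soft_perm d0 pi.
- exact: has_ksub_relax2_soft_or.
- exact: has_ksub_relax2_soft_all_equal d0.
Qed.
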